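(* Let $\psi=\Psi(\tau^*,R^* )$ for some generic $M$-layer model $(\tau^*,R^* )$, and let $(\sigma,\alpha)$ be the data of an $M$-layer model $(\tau,R)\in U_\psi\times\mathcal{R}_\psi$. Let $\sigma_\psi=(\sigma_{\psi(k^0)},\sigma_{\psi(k^1)},\ldots,\sigma_{\psi(k^M)})\in\mathbb{R}^{M+1}$. Then $$\tau=\sigma_\psi J_M,\qquad R_0=\alpha_1,\qquad R_n=\frac{\alpha_{\psi(k^n)}}{\prod_{j=0}^{n-1}(1-R_j^2)}\quad(1\le n\le M).$$
   Context: Primary vectors: $k^n\in\mathbb{Z}^{M+1}$ has $k^n_j=1$ for $j\le n$ and $0$ otherwise ($0\le n\le M$). $J_M$ is the $(M+1)\times(M+1)$ matrix with $1$ on the diagonal, $-1$ on the superdiagonal and $0$ elsewhere (the inverse of the upper-triangular all-ones matrix $K_M$ whose columns are $(k^0)^T,\ldots,(k^M)^T$); $\tau,\sigma_\psi$ are row vectors. An $M$-layer model ($M\ge1$) is $(\tau,R)$ with $\tau\in\mathbb{R}^{M+1}_{>0}$, $R\in(-1,1)^{M+1}$. $\mathfrak{L}_M\subset\mathbb{Z}^{M+1}_{\geq0}$: all $k$ with $k_0=1$ and $k_n>0\Rightarrow k_{n-1}>0$; $\mathfrak{L}^\tau_M=\{k\in\mathfrak{L}_M:\langle k,\tau\rangle\le\langle\mathbb{1},\tau\rangle\}$. Amplitude polynomial: $\mathbb{1}=(1,\ldots,1)$; inequalities and $\min$ entrywise; $x^k=\prod_n x_n^{k_n}$, $\binom{k}{b}=\prod_n\binom{k_n}{b_n}$;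 $\tilde k=(k_1,\ldots,k_M,0)$, $u=\min\{\mathbb{1},\tilde k\}$, $V(k)=\{b:u\le b\le\min\{k,\tilde k\}\}$, $a(x,k)=\sum_{b\in V(k)}\binom{k}{b}\binom{\tilde k-u}{b-u}(-x)^{\tilde k-b}x^{k-b}\prod_n(1-x_n^2)^{b_n}$. Data: normal form $\sum_{n=1}^d\alpha_n\delta(t-\sigma_n)$ ($\alpha_n\ne0$, $\sigma_1<\cdots<\sigma_d$) of $D^{(\tau,R)}(t)=\sum_{k\in\mathfrak{L}^\tau_M}a(R,k)\delta(t-\langle k,\tau\rangle)$. Enumeration function $\Psi(\tau,R):\mathfrak{L}^\tau_M\to\{0,\ldots,d\}$: $k\mapsto0$ if $\langle k,\tau\rangle\notin\{\sigma_n\}$, else $k\mapsto1+\#\{n:\sigma_n<\langle k,\tau\rangle\}$. Generic: $\Psi(\tau,R)$ injective and never $0$. $\mathcal{R}_\psi=\{R'\in(-1,1)^{M+1}:a(R',k)\ne0\ \forall k\in\mathfrak{L}^{\tau^*}_M\}$; $U_\psi=\{\tau'\in\mathbb{R}^{M+1}_{>0}:\Psi(\tau',R')=\psi\ \forall R'\in\mathcal{R}_\psi\}$ (equality including domains). *)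

From Stdlib Require Import Reals Lra Lia Arith List.
Import ListNotations.
Open Scope R_scope.

(* Conventions:
   - real vectors in R^{M+1} (tau, R, x, sigma_psi) are functions nat -> R,
     only the entries 0..M are relevant;
   - integer vectors k in Z_{>=0}^{M+1} are lists of nat of length M+1,
     k_n = nth n k 0;
   - the data (sigma, alpha) of a model is indexed by 1..d. *)

Definition sumR (l : list R) : R := fold_right Rplus 0 l.
Definition prodR (l : list R) : R := fold_right Rmult 1 l.

Definition kc (k : list nat) (n : nat) : nat := nth n k 0%nat.

Definition dotk (M : nat) (k : list nat) (tau : nat -> R) : R :=
  sumR (map (fun n => INR (kc k n) * tau n) (seq 0 (S M))).

Definition sum1 (M : nat) (tau : nat -> R) : R :=
  sumR (map tau (seq 0 (S M))).

Definition inL (M : nat) (k : list nat) : Prop :=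
  length k = S M /\ kc k 0 = 1%nat /\
  (forall n, (1 <= n <= M)%nat -> (0 < kc k n)%nat -> (0 < kc k (n - 1))%nat).

Definition inLtau (M : nat) (tau : nat -> R) (k : list nat) : Prop :=
  inL M k /\ dotk M k tau <= sum1 M tau.

Definition is_model (M : nat) (tau Rv : nat -> R) : Prop :=
  forall n, (n <= M)%nat -> 0 < tau n /\ -1 < Rv n < 1.

Definition ktil (M : nat) (k : list nat) (n : nat) : nat :=
  if (n <? M)%nat then kc k (S n) else 0%nat.
Definition ulo (M : nat) (k : list nat) (n : nat) : nat := Nat.min 1 (ktil M k n).
Definition uhi (M : nat) (k : list nat) (n : nat) : nat := Nat.min (kc k n) (ktil M k n).

Fixpoint box (lo hi : list nat) : list (list nat) :=
  match lo, hi with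
  | l :: lo', h :: hi' =>
      flat_map (fun i => map (cons i) (box lo' hi')) (seq l (S h - l))
  | _, _ => [nil]
  end.

Definition Vset (M : nat) (k : list nat) : list (list nat) :=
  box (map (ulo M k) (seq 0 (S M))) (map (uhi M k) (seq 0 (S M))).

(* the summand of a(x,k) for a given b; C is the (real) binomial coefficient of
   Stdlib's Binomial, only used with arguments 0 <= p <= n here *)
Definition aterm (M : nat) (x : nat -> R) (k b : list nat) : R :=
  prodR (map (fun n =>
    C (kc k n) (kc b n)
    * C (ktil M k n - ulo M k n) (kc b n - ulo M k n)
    * (- x n) ^ (ktil M k n - kc b n)
    * (x n) ^ (kc k n - kc b n)
    * (1 - (x n) ^ 2) ^ (kc b n)) (seq 0 (S M))).

Definition amp (M : nat) (x : nat -> R) (k : list nat) : R :=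
  sumR (map (aterm M x k) (Vset M k)).

(* mass of the normal form sum_{n=1}^d alpha_n delta(t - sigma_n) at t *)
Definition nf_mass (d : nat) (sigma alpha : nat -> R) (t : R) : R :=
  sumR (map (fun n => if Req_EM_T (sigma n) t then alpha n else 0) (seq 1 d)).

(* (d, sigma, alpha) is the data (normal form) of D^{(tau,R)}:
   sigma_1 < ... < sigma_d, alpha_n <> 0, and for every t the total amplitude of
   D^{(tau,R)} at t (sum of a(R,k) over the finitely many k in L_M^tau with
   <k,tau> = t, enumerated without repetition by L) equals the mass of the
   normal form at t. *)
Definition is_data (M : nat) (tau Rv : nat -> R) (d : nat) (sigma alpha : nat -> R)
  : Prop :=
  (forall n, (1 <= n)%nat -> (n < d)%nat -> sigma n < sigma (S n)) /\
  (forall n, (1 <= n <= d)%nat -> alpha n <> 0) /\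
  (forall (t : R) (L : list (list nat)),
     NoDup L ->
     (forall k, In k L <-> (inLtau M tau k /\ dotk M k tau = t)) ->
     sumR (map (amp M Rv) L) = nf_mass d sigma alpha t).

Definition Psi_val (d : nat) (sigma : nat -> R) (t : R) : nat :=
  if existsb (fun n => if Req_EM_T (sigma n) t then true else false) (seq 1 d)
  then S (length (filter (fun n => if Rlt_dec (sigma n) t then true else false)
                         (seq 1 d)))
  else 0%nat.

(* Psi(tau', R') = psi, including domains: psi has domain L_M^{tau0};
   phrased for the (unique) data of (tau', R') *)
Definition Psi_eq (M : nat) (tau' Rv' : nat -> R) (tau0 : nat -> R)
  (psi : list nat -> nat) : Prop :=
  forall d sigma alpha, is_data M tau' Rv' d sigma alpha ->
    (forall k, inLtau M tau' k <-> inLtau M tau0 k) /\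
    (forall k, inLtau M tau' k -> Psi_val d sigma (dotk M k tau') = psi k).

Definition in_Rpsi (M : nat) (tau0 : nat -> R) (Rv' : nat -> R) : Prop :=
  (forall n, (n <= M)%nat -> -1 < Rv' n < 1) /\
  (forall k, inLtau M tau0 k -> amp M Rv' k <> 0).

Definition in_Upsi (M : nat) (tau0 : nat -> R) (psi : list nat -> nat)
  (tau' : nat -> R) : Prop :=
  (forall n, (n <= M)%nat -> 0 < tau' n) /\
  (forall Rv', in_Rpsi M tau0 Rv' -> Psi_eq M tau' Rv' tau0 psi).

Definition primary (M n : nat) : list nat :=
  map (fun j => if (j <=? n)%nat then 1%nat else 0%nat) (seq 0 (S M)).

Definition Jmat (i j : nat) : R :=
  if (i =? j)%nat then 1 else if (S i =? j)%nat then -1 else 0.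
Definition vecmat (M : nat) (v : nat -> R) (A : nat -> nat -> R) (j : nat) : R :=
  sumR (map (fun i => v i * A i j) (seq 0 (S M))).

From Stdlib Require Import Reals List Lra Lia Arith.
Import ListNotations.
Open Scope R_scope.

(* The primary vectors k^n = (1,...,1,0,...,0) lie in every lattice L_M^tau, and
   the amplitude polynomial collapses on them:  V(k^n) is the single vector
   b = (1,..,1,0,..,0) with n ones, so  a(x,k^n) = x_n * prod_{j<n} (1 - x_j^2),
   while <k^n,tau> = tau_0 + ... + tau_n.

   For a model (tau,R) in U_psi x R_psi the enumeration function of its data is
   psi, which (by genericity of the reference model) never vanishes and is
   injective.  Hence every lattice point k is the only one at height <k,tau>,
   sits on the atom sigma_{psi(k)}, and carries the amplitude alpha_{psi(k)}.
   Applied to the primary vectors:  sigma_psi are the partial sums of tau, so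
   tau = sigma_psi J_M (J_M takes consecutive differences);  psi(k^0) = 1
   because no lattice point lies below tau_0 = <k^0,tau>;  and R_n is read off
   from a(R,k^n) = alpha_{psi(k^n)}, dividing by the positive product. *)

Lemma sumR_ext {A} (f g : A -> R) (l : list A) :
  (forall x, In x l -> f x = g x) -> sumR (map f l) = sumR (map g l).
Proof. intro H; f_equal; apply map_ext_in; auto. Qed.

Lemma sumR_minus {A} (f g : A -> R) (l : list A) :
  sumR (map (fun x => f x - g x) l) = sumR (map f l) - sumR (map g l).
Proof. induction l; unfold sumR in *; simpl; [lra | rewrite IHl; lra]. Qed.

Lemma sumR_le {A} (f g : A -> R) (l : list A) :
  (forall x, In x l -> f x <= g x) -> sumR (map f l) <= sumR (map g l).
Proof.
  induction l as [|a l IH]; unfold sumR in *; simpl; intros H; [lra|].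
  specialize (IH (fun x Hx => H x (or_intror Hx))).
  specialize (H a (or_introl eq_refl)). lra.
Qed.

Lemma sumR_nonneg {A} (f : A -> R) (l : list A) :
  (forall x, In x l -> 0 <= f x) -> 0 <= sumR (map f l).
Proof.
  induction l as [|a l IH]; unfold sumR in *; simpl; intros H; [lra|].
  specialize (IH (fun x Hx => H x (or_intror Hx))).
  specialize (H a (or_introl eq_refl)). lra.
Qed.

Lemma sumR_single {A} (f : A -> R) (a : A) : sumR (map f [a]) = f a.
Proof. unfold sumR; simpl; ring. Qed.

Lemma sum_delta_notin (f : nat -> R) (m : nat) (l : list nat) : ~ In m l ->
  sumR (map (fun j => if Nat.eqb j m then f j else 0) l) = 0.
Proof.
  induction l as [|a l IH]; unfold sumR in *; simpl; intros H; [lra|].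
  destruct (Nat.eqb_spec a m); [exfalso; apply H; auto|].
  rewrite IH by tauto; lra.
Qed.

Lemma sum_delta (f : nat -> R) (m : nat) (l : list nat) : NoDup l -> In m l ->
  sumR (map (fun j => if Nat.eqb j m then f j else 0) l) = f m.
Proof.
  induction l as [|a l IH]; intros Hn Hi; [contradiction|]. inversion Hn; subst.
  change (sumR (map (fun j => if Nat.eqb j m then f j else 0) (a :: l)))
    with ((if Nat.eqb a m then f a else 0)
          + sumR (map (fun j => if Nat.eqb j m then f j else 0) l)).
  destruct (Nat.eqb_spec a m).
  - subst. rewrite sum_delta_notin by auto. lra.
  - destruct Hi as [Hi|Hi]; [congruence|]. rewrite IH by auto; lra.
Qed.

Lemma sum_delta_range (f : nat -> R) (M m : nat) : (m <= M)%nat ->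
  sumR (map (fun j => if Nat.eqb j m then f j else 0) (seq 0 (S M))) = f m.
Proof. intro Hm. apply sum_delta; [apply seq_NoDup | apply in_seq; lia]. Qed.

Lemma prodR_ext {A} (f g : A -> R) (l : list A) :
  (forall x, In x l -> f x = g x) -> prodR (map f l) = prodR (map g l).
Proof. intro H; f_equal; apply map_ext_in; auto. Qed.

Lemma prodR_app (l1 l2 : list R) : prodR (l1 ++ l2) = prodR l1 * prodR l2.
Proof. induction l1; unfold prodR in *; simpl; [lra | rewrite IHl1; lra]. Qed.

Lemma prodR_one {A} (l : list A) : prodR (map (fun _ => 1) l) = 1.
Proof. induction l; unfold prodR in *; simpl; [lra | rewrite IHl; lra]. Qed.

Lemma prodR_pos (l : list R) : (forall x, In x l -> 0 < x) -> 0 < prodR l.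
Proof.
  induction l; unfold prodR in *; simpl; intros H; [lra|].
  apply Rmult_lt_0_compat; auto.
Qed.

Lemma prod_weights_pos (M n : nat) (Rv : nat -> R) : (n <= M)%nat ->
  (forall j, (j <= M)%nat -> -1 < Rv j < 1) ->
  0 < prodR (map (fun j => 1 - Rv j ^ 2) (seq 0 n)).
Proof.
  intros Hn HR. apply prodR_pos. intros y Hy.
  apply in_map_iff in Hy. destruct Hy as [j [<- Hj]]. apply in_seq in Hj.
  destruct (HR j ltac:(lia)). simpl; nra.
Qed.

Lemma vecmat_J (M : nat) (v : nat -> R) (j : nat) : (j <= M)%nat ->
  vecmat M v Jmat j = v j - (match j with O => 0 | S j' => v j' end).
Proof.
  intros Hj. unfold vecmat, Jmat.
  rewrite (sumR_ext _ (fun i => (if Nat.eqb i j then v i else 0)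
                                - (if Nat.eqb (S i) j then v i else 0))).
  2:{ intros i _. destruct (Nat.eqb_spec i j), (Nat.eqb_spec (S i) j);
      subst; try lia; ring. }
  rewrite sumR_minus, sum_delta_range by exact Hj.
  destruct j as [|j'].
  - rewrite (sumR_ext _ (fun i => if Nat.eqb i (S M) then v i else 0)).
    + rewrite sum_delta_notin; [ring|]. rewrite in_seq. lia.
    + intros i Hi. apply in_seq in Hi.
      destruct (Nat.eqb_spec i (S M)); [lia | reflexivity].
  - rewrite (sumR_ext _ (fun i => if Nat.eqb i j' then v i else 0))
      by (intros; reflexivity).
    rewrite sum_delta_range by lia. ring.
Qed.

Lemma nth_map_seq0 (f : nat -> nat) (M j : nat) : (j < S M)%nat ->
  nth j (map f (seq 0 (S M))) 0%nat = f j.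
Proof.
  intro H.
  rewrite nth_indep with (d' := f 0%nat) by (rewrite length_map, length_seq; lia).
  rewrite map_nth, seq_nth by lia. reflexivity.
Qed.

Lemma kc_primary (M n j : nat) : (j <= M)%nat ->
  kc (primary M n) j = if (j <=? n)%nat then 1%nat else 0%nat.
Proof. intro H. unfold kc, primary. rewrite nth_map_seq0 by lia. reflexivity. Qed.

Lemma dotk_primary (M i : nat) (tau : nat -> R) : (i <= M)%nat ->
  dotk M (primary M i) tau
  = sumR (map (fun j => if (j <=? i)%nat then tau j else 0) (seq 0 (S M))).
Proof.
  intros Hi. unfold dotk. apply sumR_ext. intros j Hj. apply in_seq in Hj.
  rewrite kc_primary by lia. destruct (j <=? i)%nat; simpl; ring.
Qed.

Lemma dotk_primary0 (M : nat) (tau : nat -> R) : dotk M (primary M 0) tau = tau 0%nat.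
Proof.
  rewrite dotk_primary by lia.
  rewrite (sumR_ext _ (fun j => if Nat.eqb j 0 then tau j else 0))
    by (intros j _; destruct j; reflexivity).
  apply sum_delta_range; lia.
Qed.

Lemma dotk_primaryS (M i : nat) (tau : nat -> R) : (S i <= M)%nat ->
  dotk M (primary M (S i)) tau - dotk M (primary M i) tau = tau (S i).
Proof.
  intros Hi. rewrite !dotk_primary by lia. rewrite <- sumR_minus.
  rewrite (sumR_ext _ (fun j => if Nat.eqb j (S i) then tau j else 0)).
  - apply sum_delta_range; lia.
  - intros j _. destruct (Nat.leb_spec j (S i)), (Nat.leb_spec j i),
      (Nat.eqb_spec j (S i)); try lia; ring.
Qed.

(* Since J_M inverts the partial-sum matrix K_M, a vector whose entries are the
   heights <k^i, tau> of the primary vectors determines tau as s J_M. *)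
Lemma tau_from_primary_heights (M : nat) (tau s : nat -> R) :
  (forall i, (i <= M)%nat -> s i = dotk M (primary M i) tau) ->
  forall j, (j <= M)%nat -> tau j = vecmat M s Jmat j.
Proof.
  intros Hs j Hj. rewrite vecmat_J by exact Hj. destruct j as [|j].
  - rewrite Hs, dotk_primary0 by lia. ring.
  - rewrite !Hs by lia. rewrite dotk_primaryS by lia. reflexivity.
Qed.

(* Every lattice point has height at least tau_0 (its first entry is 1). *)
Lemma dotk_ge_tau0 (M : nat) (k : list nat) (tau : nat -> R) :
  inL M k -> (forall n, (n <= M)%nat -> 0 < tau n) -> tau 0%nat <= dotk M k tau.
Proof.
  intros [_ [H0 _]] Ht.
  change (dotk M k tau) with (INR (kc k 0) * tau 0%nat
     + sumR (map (fun n => INR (kc k n) * tau n) (seq 1 M))).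
  rewrite H0. simpl INR.
  assert (0 <= sumR (map (fun n => INR (kc k n) * tau n) (seq 1 M))).
  { apply sumR_nonneg. intros j Hj. apply in_seq in Hj.
    apply Rmult_le_pos; [apply pos_INR | left; apply Ht; lia]. }
  lra.
Qed.

Lemma primary_inLtau (M n : nat) (tau : nat -> R) : (n <= M)%nat ->
  (forall j, (j <= M)%nat -> 0 < tau j) -> inLtau M tau (primary M n).
Proof.
  intros Hn Ht. split; [split; [|split]|].
  - unfold primary. rewrite length_map, length_seq. reflexivity.
  - rewrite kc_primary by lia. reflexivity.
  - intros m Hm Hp. rewrite kc_primary in Hp by lia. rewrite kc_primary by lia.
    destruct (Nat.leb_spec m n); [|simpl in Hp; lia].
    destruct (Nat.leb_spec (m - 1) n); lia.
  - unfold dotk, sum1. apply sumR_le. intros j Hj. apply in_seq in Hj.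
    rewrite kc_primary by lia. specialize (Ht j ltac:(lia)).
    destruct (j <=? n)%nat; simpl; lra.
Qed.

Lemma ktil_primary (M n j : nat) : (n <= M)%nat -> (j <= M)%nat ->
  ktil M (primary M n) j = if (j <? n)%nat then 1%nat else 0%nat.
Proof.
  intros Hn Hj. unfold ktil. destruct (Nat.ltb_spec j M).
  - rewrite kc_primary by lia.
    destruct (Nat.leb_spec (S j) n), (Nat.ltb_spec j n); lia.
  - destruct (Nat.ltb_spec j n); lia.
Qed.

Lemma ulo_primary (M n j : nat) : (n <= M)%nat -> (j <= M)%nat ->
  ulo M (primary M n) j = if (j <? n)%nat then 1%nat else 0%nat.
Proof.
  intros Hn Hj. unfold ulo. rewrite ktil_primary by lia.
  destruct (j <? n)%nat; reflexivity.
Qed.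

Lemma uhi_primary (M n j : nat) : (n <= M)%nat -> (j <= M)%nat ->
  uhi M (primary M n) j = if (j <? n)%nat then 1%nat else 0%nat.
Proof.
  intros Hn Hj. unfold uhi. rewrite ktil_primary, kc_primary by lia.
  destruct (Nat.leb_spec j n), (Nat.ltb_spec j n); simpl; try reflexivity; lia.
Qed.

Lemma box_diag (l : list nat) : box l l = [l].
Proof.
  induction l as [|a l IH]; [reflexivity|].
  cbn [box]. replace (S a - a)%nat with 1%nat by lia. simpl. rewrite IH. reflexivity.
Qed.

(* V(k^n) is a single vector, so a(x, k^n) is a single product. *)
Lemma amp_primary (M n : nat) (x : nat -> R) : (n <= M)%nat ->
  amp M x (primary M n) = x n * prodR (map (fun j => 1 - x j ^ 2) (seq 0 n)).
Proof.
  intro Hn. set (k := primary M n). set (b := map (ulo M k) (seq 0 (S M))).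
  assert (Hbox : Vset M k = [b]).
  { unfold Vset.
    replace (map (uhi M k) (seq 0 (S M))) with b by
      (apply map_ext_in; intros j Hj; apply in_seq in Hj;
       unfold k; rewrite ulo_primary, uhi_primary by lia; reflexivity).
    apply box_diag. }
  unfold amp. rewrite Hbox, sumR_single. unfold aterm.
  rewrite (prodR_ext _ (fun j => if (j <? n)%nat then 1 - x j ^ 2
                                 else if (j =? n)%nat then x j else 1)).
  2:{ intros j Hj. apply in_seq in Hj.
      assert (Hb : kc b j = if (j <? n)%nat then 1%nat else 0%nat).
      { unfold b, kc. rewrite nth_map_seq0 by lia. apply ulo_primary; lia. }
      unfold k. rewrite Hb, ktil_primary, ulo_primary, kc_primary by lia.
      destruct (Nat.ltb_spec j n).
      - destruct (Nat.leb_spec j n); [|lia]. simpl. unfold C; simpl. field.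
      - destruct (Nat.eqb_spec j n); destruct (Nat.leb_spec j n); try lia; simpl;
          unfold C; simpl; field. }
  replace (S M) with (n + S (M - n))%nat by lia.
  rewrite seq_app, map_app, prodR_app. simpl (seq (0 + n) _). cbn [map].
  change (prodR (?a :: ?l)) with (a * prodR l).
  rewrite (prodR_ext _ (fun j => 1 - x j ^ 2) (seq 0 n)).
  2:{ intros j Hj. apply in_seq in Hj. destruct (Nat.ltb_spec j n); [reflexivity | lia]. }
  rewrite (prodR_ext _ (fun _ => 1) (seq (S n) (M - n))).
  2:{ intros j Hj. apply in_seq in Hj. destruct (Nat.ltb_spec j n); [lia|].
      destruct (Nat.eqb_spec j n); [lia | reflexivity]. }
  rewrite prodR_one, Nat.ltb_irrefl, Nat.eqb_refl. ring.
Qed.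

Lemma filter_all_true {A} (f : A -> bool) (l : list A) :
  (forall x, In x l -> f x = true) -> filter f l = l.
Proof.
  induction l; simpl; intros H; [reflexivity|].
  rewrite H by auto. rewrite IHl by auto. reflexivity.
Qed.

Lemma filter_all_false {A} (f : A -> bool) (l : list A) :
  (forall x, In x l -> f x = false) -> filter f l = [].
Proof.
  induction l; simpl; intros H; [reflexivity|]. rewrite H by auto. apply IHl; auto.
Qed.

Section NormalForm.

Variables (d : nat) (sigma : nat -> R).
Hypothesis hstep : forall n, (1 <= n)%nat -> (n < d)%nat -> sigma n < sigma (S n).

Lemma atoms_increasing (n m : nat) :
  (1 <= n)%nat -> (n < m)%nat -> (m <= d)%nat -> sigma n < sigma m.
Proof.
  induction m; intros H1 H2 H3; [lia|].
  destruct (Nat.eq_dec n m).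
  - subst. apply hstep; lia.
  - apply Rlt_trans with (sigma m); [apply IHm; lia | apply hstep; lia].
Qed.

Lemma atoms_injective (n m : nat) :
  (1 <= n <= d)%nat -> (1 <= m <= d)%nat -> sigma n = sigma m -> n = m.
Proof.
  intros Hn Hm E. destruct (lt_eq_lt_dec n m) as [[Hlt|]|Hlt]; [|assumption|].
  - pose proof (atoms_increasing n m ltac:(lia) Hlt ltac:(lia)). lra.
  - pose proof (atoms_increasing m n ltac:(lia) Hlt ltac:(lia)). lra.
Qed.

Lemma nf_mass_atom (alpha : nat -> R) (n0 : nat) : (1 <= n0 <= d)%nat ->
  nf_mass d sigma alpha (sigma n0) = alpha n0.
Proof.
  intros Hn. unfold nf_mass.
  rewrite (sumR_ext _ (fun j => if Nat.eqb j n0 then alpha j else 0)).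
  - apply sum_delta; [apply seq_NoDup | apply in_seq; lia].
  - intros j Hj. apply in_seq in Hj.
    destruct (Req_EM_T (sigma j) (sigma n0)) as [E|E]; destruct (Nat.eqb_spec j n0).
    + reflexivity.
    + exfalso. apply (atoms_injective j n0) in E; lia.
    + subst. contradiction.
    + reflexivity.
Qed.

Lemma Psi_val_atom (t : R) : Psi_val d sigma t <> 0%nat ->
  (1 <= Psi_val d sigma t <= d)%nat /\ sigma (Psi_val d sigma t) = t.
Proof.
  intros Hne. unfold Psi_val in *.
  destruct (existsb _ (seq 1 d)) eqn:Ee; [|contradiction].
  apply existsb_exists in Ee. destruct Ee as [n0 [Hin Hs]]. apply in_seq in Hin.
  destruct (Req_EM_T (sigma n0) t) as [Es|]; [|discriminate].
  assert (Hcount : S (length (filter (fun n => if Rlt_dec (sigma n) t then true else false)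
                                     (seq 1 d))) = n0).
  { replace d with ((n0 - 1) + S (d - n0))%nat by lia.
    rewrite seq_app, filter_app, length_app.
    rewrite filter_all_true, filter_all_false, length_seq; [simpl; lia | |].
    - intros j Hj. apply in_seq in Hj.
      destruct (Rlt_dec (sigma j) t) as [Hl|Hl]; [|reflexivity]. exfalso.
      destruct (Nat.eq_dec j n0); [subst; lra|].
      pose proof (atoms_increasing n0 j ltac:(lia) ltac:(lia) ltac:(lia)). lra.
    - intros j Hj. apply in_seq in Hj.
      destruct (Rlt_dec (sigma j) t) as [Hl|Hl]; [reflexivity|]. exfalso.
      pose proof (atoms_increasing j n0 ltac:(lia) ltac:(lia) ltac:(lia)). lra. }
  rewrite Hcount. split; [lia | exact Es].
Qed.

End NormalForm.

Section DataOfModel.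

Variables (M d : nat) (tau Rv sigma alpha : nat -> R).
Hypothesis htau : forall n, (n <= M)%nat -> 0 < tau n.
Hypothesis hdata : is_data M tau Rv d sigma alpha.

Lemma amp_isolated (k : list nat) : inLtau M tau k ->
  (forall k', inLtau M tau k' -> dotk M k' tau = dotk M k tau -> k' = k) ->
  amp M Rv k = nf_mass d sigma alpha (dotk M k tau).
Proof.
  intros hk huniq. destruct hdata as [_ [_ hmass]].
  rewrite <- (hmass _ [k]), sumR_single; [reflexivity | repeat constructor; intros []|].
  intros k'. split.
  - intros [<- | []]. split; [exact hk | reflexivity].
  - intros [hk' ht]. left. symmetry. exact (huniq k' hk' ht).
Qed.

(* Every atom of the data lies at height at least tau_0: an atom carries
   nonzero mass, so some lattice point lies at its height. *)
Lemma atoms_above_tau0 (n : nat) : (1 <= n <= d)%nat -> tau 0%nat <= sigma n.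
Proof.
  intros Hn. destruct hdata as [hstep [hanz hmass]].
  destruct (Rle_lt_dec (tau 0%nat) (sigma n)) as [|Hlt]; [assumption|].
  exfalso. apply (hanz n Hn).
  rewrite <- (nf_mass_atom d sigma hstep alpha n Hn).
  rewrite <- (hmass (sigma n) [] (NoDup_nil _)); [reflexivity|].
  intros k; split; [intros []|]. intros [hk hdk].
  pose proof (dotk_ge_tau0 M k tau (proj1 hk) htau). lra.
Qed.

(* Now psi is the enumeration function of the data, nonvanishing and injective
   on L_M^tau: the situation of a model in U_psi x R_psi. *)
Variable psi : list nat -> nat.
Hypothesis hpsi : forall k, inLtau M tau k -> Psi_val d sigma (dotk M k tau) = psi k.
Hypothesis hpsi_nz : forall k, inLtau M tau k -> psi k <> 0%nat.
Hypothesis hpsi_inj : forall k k', inLtau M tau k -> inLtau M tau k' ->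
  psi k = psi k' -> k = k'.

Lemma psi_atom (k : list nat) : inLtau M tau k ->
  (1 <= psi k <= d)%nat /\ sigma (psi k) = dotk M k tau.
Proof.
  intros hk. rewrite <- (hpsi k hk).
  apply Psi_val_atom; [exact (proj1 hdata) |].
  rewrite hpsi by exact hk. exact (hpsi_nz k hk).
Qed.

Lemma amp_psi (k : list nat) : inLtau M tau k -> amp M Rv k = alpha (psi k).
Proof.
  intros hk. destruct (psi_atom k hk) as [Hrange Hs].
  assert (huniq : forall k', inLtau M tau k' -> dotk M k' tau = dotk M k tau -> k' = k).
  { intros k' hk' E. apply (hpsi_inj k' k hk' hk).
    rewrite <- (hpsi k' hk'), <- (hpsi k hk), E. reflexivity. }
  rewrite (amp_isolated k hk huniq), <- Hs.
  exact (nf_mass_atom d sigma (proj1 hdata) alpha _ Hrange).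
Qed.

Lemma psi_primary0 : psi (primary M 0) = 1%nat.
Proof.
  assert (hk0 := primary_inLtau M 0 tau ltac:(lia) htau).
  destruct (psi_atom _ hk0) as [Hrange Hs]. rewrite dotk_primary0 in Hs.
  destruct (Nat.eq_dec (psi (primary M 0)) 1) as [|Hne]; [assumption | exfalso].
  pose proof (atoms_increasing d sigma (proj1 hdata) 1 (psi (primary M 0))
                ltac:(lia) ltac:(lia) ltac:(lia)).
  pose proof (atoms_above_tau0 1 ltac:(lia)). lra.
Qed.

End DataOfModel.

Theorem theorem4p4 (M : nat) (hM : (1 <= M)%nat)
  (taus Rs : nat -> R) (hmods : is_model M taus Rs)
  (ds : nat) (sigmas alphas : nat -> R)
  (hdatas : is_data M taus Rs ds sigmas alphas)
  (psi : list nat -> nat)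
  (hpsi : forall k, inLtau M taus k -> psi k = Psi_val ds sigmas (dotk M k taus))
  (hgen_nz : forall k, inLtau M taus k -> psi k <> 0%nat)
  (hgen_inj : forall k k', inLtau M taus k -> inLtau M taus k' ->
                psi k = psi k' -> k = k')
  (tau Rv : nat -> R) (hU : in_Upsi M taus psi tau) (hR : in_Rpsi M taus Rv)
  (d : nat) (sigma alpha : nat -> R) (hdata : is_data M tau Rv d sigma alpha) :
  let sigma_psi := fun i => sigma (psi (primary M i)) in
  (forall j, (j <= M)%nat -> tau j = vecmat M sigma_psi Jmat j) /\
  Rv 0%nat = alpha 1%nat /\
  (forall n, (1 <= n <= M)%nat ->
     Rv n = alpha (psi (primary M n)) /
           prodR (map (fun j => 1 - (Rv j) ^ 2) (seq 0 n))).
Proof.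
  intros sigma_psi. destruct hU as [htau hUpsi].
  destruct (hUpsi Rv hR d sigma alpha hdata) as [hdom hval].
  assert (hnz : forall k, inLtau M tau k -> psi k <> 0%nat)
    by (intros k hk; apply hgen_nz, hdom, hk).
  assert (hinj : forall k k', inLtau M tau k -> inLtau M tau k' -> psi k = psi k' -> k = k')
    by (intros k k' hk hk'; apply hgen_inj; apply hdom; assumption).
  assert (hprim : forall n, (n <= M)%nat -> inLtau M tau (primary M n))
    by (intros n Hn; apply primary_inLtau; assumption).
  assert (hamp : forall n, (n <= M)%nat ->
            amp M Rv (primary M n) = alpha (psi (primary M n)))
    by (intros n Hn; exact (amp_psi M d tau Rv sigma alpha hdata psi hval hnz hinj _ (hprim n Hn))).
  split; [|split].
  - apply tau_from_primary_heights. intros i Hi.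
    exact (proj2 (psi_atom M d tau Rv sigma alpha hdata psi hval hnz _ (hprim i Hi))).
  - rewrite <- (psi_primary0 M d tau Rv sigma alpha htau hdata psi hval hnz).
    rewrite <- hamp, amp_primary by lia. unfold prodR; simpl; ring.
  - intros n Hn. rewrite <- hamp, amp_primary by lia.
    pose proof (prod_weights_pos M n Rv ltac:(lia) (proj1 hR)). field. lra.
Qed.
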